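(* If $(\rho,V)$ is an $R[G_n]$-module of $\psi$-Whittaker type, then the restriction map $\mathcal{W}(V,\psi_R)\to\mathrm{Ind}_{N_n}^{P_n}\psi_R$, $W\mapsto W|_{P_n}$, is surjective.
   Context: Let $p$ be a prime, $q$ a power of $p$, $G_n=\mathrm{GL}_n(\mathbb{F}_q)$, $R$ a commutative Noetherian $\mathbb{Z}[\frac1p,\zeta_p]$-algebra with $0\ne1$. $N_n$ is the upper unipotent subgroup and $P_n$ the mirabolic subgroup (matrices with last row $(0,\dots,0,1)$). Fix nontrivial $\psi:(\mathbb{F}_q,+)\to\mathbb{Z}[\frac1p,\zeta_p]^\times$, with image $\psi_R$ in $R^\times$, a character of $N_n$ via $u\mapsto\psi_R(\sum_iu_{i,i+1})$. $\mathrm{Ind}_{N_n}^{H}\psi_R=\{f:H\to R: f(uh)=\psi_R(u)f(h)\}$ for $H=P_n,G_n$. $V$ is of $\psi$-Whittaker type if its $(N_n,\psi_R)$-coinvariants are free of rank one over $R$; a generator $\lambda$ of their $R$-dual gives $V\to\mathrm{Ind}_{N_n}^{G_n}\psi_R$, $v\mapsto(g\mapsto\lambda(\overline{gv}))$, with image the Whittaker model $\mathcal{W}(V,\psi_R)$. *)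

From HB Require Import structures.
From mathcomp Require Import all_boot all_order all_algebra all_fingroup all_field.
Set Implicit Arguments. Unset Strict Implicit. Unset Printing Implicit Defensive.
Import GRing.Theory.
Local Open Scope ring_scope.

Definition is_ideal (R : comNzRingType) (I : R -> Prop) : Prop :=
  [/\ I 0, (forall x y, I x -> I y -> I (x + y)) & (forall r x, I x -> I (r * x))].

Definition noetherian (R : comNzRingType) : Prop :=
  forall I : nat -> R -> Prop,
    (forall k, is_ideal (I k)) -> (forall k x, I k x -> I k.+1 x) ->
    exists m, forall k x, (m <= k)%N -> I k x -> I m x.

(* psi_R(a) = zeta ^ e(a), where zeta is the image in R of the primitive p-th root
   of unity zeta_p and e : F_q -> Z/p is additive (psi = zeta_p ^ e). *)
Definition psiR (R : comNzRingType) (F : finFieldType) (zeta : R) (e : F -> nat) (a : F) : R :=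
  zeta ^+ e a.

(* G_n = GL_{n+1}(F) (matrix size n.+1). *)
Definition unipotent (F : finFieldType) (n : nat) : {set {'GL_n.+1[F]}} :=
  [set g : {'GL_n.+1[F]} | [forall i : 'I_n.+1, [forall j : 'I_n.+1,
      (((j < i)%N ==> (GLval g i j == 0)) && ((i == j) ==> (GLval g i j == 1)))]]].

Definition mirabolic (F : finFieldType) (n : nat) : {set {'GL_n.+1[F]}} :=
  [set g : {'GL_n.+1[F]} | [forall j : 'I_n.+1, GLval g ord_max j == (j == ord_max)%:R]].

Definition psiN (R : comNzRingType) (F : finFieldType) (n : nat) (psi : F -> R)
  (u : {'GL_n.+1[F]}) : R :=
  psi (\sum_(i < n) GLval u (widen_ord (leqnSn n) i) (lift ord0 i)).

Definition is_rep (R : comNzRingType) (G : finGroupType) (V : lmodType R)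
  (rho : G -> V -> V) : Prop :=
  [/\ (forall g a u v, rho g (a *: u + v) = a *: rho g u + rho g v),
      (forall v, rho 1%g v = v) &
      (forall g h v, rho (g * h)%g v = rho g (rho h v))].

(* kernel of V -> V_{N,chi}: the R-span of rho(u) v - chi(u) v, u in N *)
Definition coinv_ker (R : comNzRingType) (G : finGroupType) (V : lmodType R)
  (rho : G -> V -> V) (N : {set G}) (chi : G -> R) (v : V) : Prop :=
  exists s : seq (R * (G * V)),
    all (fun x => x.2.1 \in N) s /\
    v = \sum_(x <- s) x.1 *: (rho x.2.1 x.2.2 - chi x.2.1 *: x.2.2).

(* (N,chi)-coinvariants free of rank one over R: some v0 whose class is a basis
   of V / coinv_ker. *)
Definition whittaker_type (R : comNzRingType) (G : finGroupType) (V : lmodType R)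
  (rho : G -> V -> V) (N : {set G}) (chi : G -> R) : Prop :=
  exists v0 : V, forall v : V,
    exists! r : R, coinv_ker rho N chi (v - r *: v0).

(* R-linear functionals on V_{N,chi} = R-linear functionals on V vanishing on the kernel *)
Definition coinv_functional (R : comNzRingType) (G : finGroupType) (V : lmodType R)
  (rho : G -> V -> V) (N : {set G}) (chi : G -> R) (mu : V -> R) : Prop :=
  (forall a u v, mu (a *: u + v) = a * mu u + mu v) /\
  (forall v, coinv_ker rho N chi v -> mu v = 0).

Definition dual_generator (R : comNzRingType) (G : finGroupType) (V : lmodType R)
  (rho : G -> V -> V) (N : {set G}) (chi : G -> R) (lam : V -> R) : Prop :=
  coinv_functional rho N chi lam /\
  (forall mu, coinv_functional rho N chi mu -> exists r : R, forall v, mu v = r * lam v).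

Definition whittaker_model (R : comNzRingType) (G : finGroupType) (V : lmodType R)
  (rho : G -> V -> V) (lam : V -> R) (W : G -> R) : Prop :=
  exists v : V, forall g, W g = lam (rho g v).

(* Ind_N^H chi: functions on H with f(u h) = chi(u) f(h) (values off H irrelevant) *)
Definition in_Ind (R : comNzRingType) (G : finGroupType) (N H : {set G}) (chi : G -> R)
  (f : G -> R) : Prop :=
  forall u h, u \in N -> h \in H -> f (u * h)%g = chi u * f h.

From HB Require Import structures.
From mathcomp Require Import all_boot all_order all_algebra all_fingroup all_field.
From mathcomp Require Import pgroup abelian.
From Stdlib Require Import IndefiniteDescription.
Set Implicit Arguments. Unset Strict Implicit. Unset Printing Implicit Defensive.
Import GRing.Theory.
Local Open Scope ring_scope.

(* Averaging a vector v0 with lam v0 = 1 against psi^-1 over N gives v1 with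
   u v1 = psi(u) v1 for u in N, so Phi(g) = lam(g v1) is (N, psi)-bi-equivariant
   and Phi(1) = |N|, a power of p and hence a unit of R.  A bi-equivariant
   function vanishes on the mirabolic P outside N: for h in P \ N there are
   u, u' in N with u h = h u' (conjugates of elementary unipotents by h) whose
   psi-arguments differ, and the nondegeneracy of psi forces Phi(h) = 0.  Thus
   Phi is |N| psi on N and 0 on P \ N, and the convolution
   v = |N|^-2 sum_(x in P) f(x) x^-1 v1 satisfies lam(h v) = f(h) on P. *)

Definition nondegenerate_char (F : zmodType) (R : comNzRingType) (chi : F -> R) : Prop :=
  [/\ {morph chi : x y / x + y >-> x * y}, chi 0 = 1
    & forall c, (forall x, chi x * c = c) -> c = 0].

Lemma nondegenerate_char_twist (F : fieldType) (R : comNzRingType) (chi : F -> R)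
    (a b : F) (c : R) :
  nondegenerate_char chi -> a != b ->
  (forall t, chi (t * a) * c = c * chi (t * b)) -> c = 0.
Proof.
move=> [chiD chi0 chi_fix] ab twist; apply: chi_fix => x.
pose t := x / (a - b).
have ta : t * a = t * b + x.
  have tab : t * (a - b) = x by rewrite divfK // subr_eq0.
  by rewrite -tab mulrBr addrC subrK.
have chiN : chi (- (t * b)) * chi (t * b) = 1 by rewrite -chiD addNr chi0.
have := twist t; rewrite ta chiD => twist_t.
transitivity (chi (- (t * b)) * (chi (t * b) * chi x * c)); first by rewrite !mulrA chiN mul1r.
by rewrite twist_t mulrCA chiN mulr1.
Qed.

Lemma expr_unity_sum (R : comNzRingType) (p : nat) (zeta : R) :
  \sum_(i < p) zeta ^+ i = 0 -> zeta ^+ p = 1.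
Proof. by move=> zeta_sum; apply/eqP; rewrite -subr_eq0 subrX1 zeta_sum mulr0. Qed.

Lemma unity_sum_fixed_eq0 (R : comNzRingType) (p s : nat) (zeta c pinv : R) :
  prime p -> p%:R * pinv = 1 -> \sum_(i < p) zeta ^+ i = 0 -> ~~ (p %| s)%N ->
  zeta ^+ s * c = c -> c = 0.
Proof.
move=> p_pr pinvE zeta_sum p'_s fix_s.
have fixX m : zeta ^+ (s * m) * c = c.
  by elim: m => [|m IHm]; rewrite ?muln0 ?mul1r // mulnS exprD -mulrA IHm.
have s_gt0 : (0 < s)%N by rewrite lt0n; apply: contraNneq p'_s => ->.
have fix1 : zeta * c = c.
  have [km kn Bezout _] := egcdnP p s_gt0.
  have /eqnP s_p_coprime : coprime s p by rewrite coprime_sym prime_coprime.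
  have := fixX km; rewrite mulnC Bezout s_p_coprime exprD mulnC exprM.
  by rewrite (expr_unity_sum zeta_sum) expr1n mul1r expr1.
have fix_sum : \sum_(i < p) zeta ^+ i * c = c *+ p.
  rewrite -[in RHS](card_ord p) -sumr_const; apply: eq_bigr => i _.
  by elim: (nat_of_ord i) => [|m IHm]; rewrite ?mul1r // exprS -mulrA IHm.
move: fix_sum; rewrite -mulr_suml zeta_sum mul0r => /esym c_p.
by rewrite -[c]mul1r -pinvE mulrAC mulr_natl c_p mul0r.
Qed.

Section AdditiveCharacter.
Variables (R : comNzRingType) (F : finFieldType) (p : nat) (zeta : R) (e : F -> nat).
Hypotheses (zeta_sum : \sum_(i < p) zeta ^+ i = 0)
  (e_add : forall a b : F, e (a + b) = e a + e b %[mod p]).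

Let zeta_p := expr_unity_sum zeta_sum.

Lemma psiR_add : {morph psiR zeta e : x y / x + y >-> x * y}.
Proof. by move=> a b; rewrite /psiR -exprD -(expr_mod _ zeta_p) e_add expr_mod. Qed.

Lemma psiR0 : psiR zeta e 0 = 1.
Proof.
have := e_add 0 0; rewrite addr0 -{1}[e 0]addn0 => /eqP; rewrite eqn_modDl mod0n => /eqP e0.
by rewrite /psiR -(expr_mod _ zeta_p) -e0 expr0.
Qed.

Lemma psiR_nondegenerate (pinv : R) : prime p -> p%:R * pinv = 1 ->
  (exists a, e a %% p != 0)%N -> nondegenerate_char (psiR zeta e).
Proof.
move=> p_pr pinvE [a ea]; split; [exact: psiR_add | exact: psiR0 |] => c fix_c.
exact: (unity_sum_fixed_eq0 (s := e a) p_pr pinvE zeta_sum ea (fix_c a)).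
Qed.

End AdditiveCharacter.

Definition bi_equivariant (R : comNzRingType) (G : finGroupType) (N : {set G})
    (chi : G -> R) (Phi : G -> R) : Prop :=
  forall u g, u \in N -> Phi (u * g)%g = chi u * Phi g /\ Phi (g * u)%g = Phi g * chi u.

Section Coinvariants.
Variables (R : comNzRingType) (G : finGroupType) (V : lmodType R).
Variables (rho : G -> V -> V) (N : {set G}) (chi : G -> R).

Lemma coinv_ker0 : coinv_ker rho N chi 0.
Proof. by exists [::]; rewrite big_nil. Qed.

Lemma coinv_kerD x y :
  coinv_ker rho N chi x -> coinv_ker rho N chi y -> coinv_ker rho N chi (x + y).
Proof.
move=> [s1 [s1N ->]] [s2 [s2N ->]].
by exists (s1 ++ s2); rewrite all_cat s1N s2N big_cat.
Qed.

Lemma coinv_kerZ a x : coinv_ker rho N chi x -> coinv_ker rho N chi (a *: x).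
Proof.
move=> [s [sN ->]]; exists [seq (a * y.1, y.2) | y <- s]; rewrite all_map.
by split=> //; rewrite big_map scaler_sumr; apply: eq_bigr => y _; rewrite scalerA.
Qed.

Lemma coinv_ker_gen u w : u \in N -> coinv_ker rho N chi (rho u w - chi u *: w).
Proof. by move=> uN; exists [:: (1, (u, w))]; rewrite /= uN big_seq1 scale1r. Qed.

Lemma whittaker_type_functional : whittaker_type rho N chi ->
  exists2 mu, coinv_functional rho N chi mu & exists w0, mu w0 = 1.
Proof.
move=> [w0 w0P]; have /all_sig [mu muP] : forall v, {r | coinv_ker rho N chi (v - r *: w0)}.
  by move=> v; apply: constructive_indefinite_description; have [r [] *] := w0P v; exists r.
have muE v r : coinv_ker rho N chi (v - r *: w0) -> mu v = r.
  by have [r0 [_ r0P]] := w0P v => /r0P <-; apply/esym/r0P.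
exists mu; last by exists w0; apply: muE; rewrite scale1r subrr; apply: coinv_ker0.
split=> [a u v | v vN]; last by apply: muE; rewrite scale0r subr0.
apply: muE; have -> : a *: u + v - (a * mu u + mu v) *: w0 =
    a *: (u - mu u *: w0) + (v - mu v *: w0).
  by rewrite scalerDl -scalerA scalerBr opprD addrACA.
by apply: coinv_kerD; [apply: coinv_kerZ |].
Qed.

Section Functional.
Variable lam : V -> R.
Hypothesis lamP : coinv_functional rho N chi lam.

Lemma lam0 : lam 0 = 0.
Proof. by case: lamP => _; apply; apply: coinv_ker0. Qed.

Lemma lamD u v : lam (u + v) = lam u + lam v.
Proof. by case: lamP => lin _; have := lin 1 u v; rewrite scale1r mul1r. Qed.

Lemma lamZ a u : lam (a *: u) = a * lam u.
Proof. by case: lamP => lin _; rewrite -[a *: u]addr0 lin lam0 addr0. Qed.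

Lemma lam_sum (I : Type) (r : seq I) (P : pred I) (F : I -> V) :
  lam (\sum_(i <- r | P i) F i) = \sum_(i <- r | P i) lam (F i).
Proof. exact: (big_morph lam lamD lam0). Qed.

Lemma lam_rho u w : u \in N -> lam (rho u w) = chi u * lam w.
Proof.
move=> uN; case: lamP => _ /(_ _ (coinv_ker_gen w uN)) /eqP.
by rewrite lamD -scaleN1r lamZ lamZ mulN1r addr_eq0 opprK => /eqP.
Qed.

End Functional.

Lemma dual_generator_attains1 lam : whittaker_type rho N chi ->
  dual_generator rho N chi lam -> exists v0, lam v0 = 1.
Proof.
move=> /whittaker_type_functional [mu muP [w0 mu_w0]] [lamP lam_gen].
have [r muE] := lam_gen mu muP.
by exists (r *: w0); rewrite (lamZ lamP) -muE.
Qed.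

End Coinvariants.

Section RestrictionOnto.
Variables (R : comNzRingType) (G : finGroupType) (V : lmodType R).
Variables (rho : G -> V -> V) (N P : {group G}) (chi : G -> R) (lam : V -> R).
Hypotheses (rho_rep : is_rep rho) (lamP : coinv_functional rho N chi lam).

Lemma rho0 g : rho g 0 = 0.
Proof.
case: rho_rep => lin _ _; have := lin g 1 0 0; rewrite !scale1r addr0 => rho00.
by apply: (addIr (rho g 0)); rewrite add0r -rho00.
Qed.

Lemma rhoD g u v : rho g (u + v) = rho g u + rho g v.
Proof. by case: rho_rep => lin _ _; have := lin g 1 u v; rewrite !scale1r. Qed.

Lemma rhoZ g a u : rho g (a *: u) = a *: rho g u.
Proof. by case: rho_rep => lin _ _; rewrite -[a *: u]addr0 lin rho0 addr0. Qed.

Lemma rho_sum g (I : Type) (r : seq I) (Q : pred I) (F : I -> V) :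
  rho g (\sum_(i <- r | Q i) F i) = \sum_(i <- r | Q i) rho g (F i).
Proof. exact: (big_morph (rho g) (rhoD g) (rho0 g)). Qed.

Lemma rhoM g h v : rho (g * h)%g v = rho g (rho h v).
Proof. by case: rho_rep. Qed.

Lemma rho1 v : rho 1%g v = v.
Proof. by case: rho_rep. Qed.

Variable v0 : V.
Hypothesis lam_v0 : lam v0 = 1.

Lemma coinv_char1 : chi 1%g = 1.
Proof. by have := lam_rho lamP v0 (group1 N); rewrite rho1 lam_v0 mulr1. Qed.

Lemma coinv_charM x y : x \in N -> y \in N -> chi (x * y)%g = chi x * chi y.
Proof.
move=> xN yN; have := lam_rho lamP v0 (groupM xN yN).
by rewrite rhoM !(lam_rho lamP) // lam_v0 !mulr1.
Qed.

Lemma coinv_charV x : x \in N -> chi (x^-1)%g * chi x = 1.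
Proof. by move=> xN; rewrite -coinv_charM ?groupV // mulVg coinv_char1. Qed.

Let v1 := \sum_(u in N) chi (u^-1)%g *: rho u v0.

Lemma rho_eigenvector u : u \in N -> rho u v1 = chi u *: v1.
Proof.
move=> uN; rewrite rho_sum scaler_sumr (reindex_inj (mulgI u^-1)%g) /=.
apply: eq_big => [x | x]; rewrite groupMl ?groupV // => xN.
by rewrite rhoZ -rhoM mulKVg invMg invgK coinv_charM ?groupV // mulrC scalerA.
Qed.

Lemma coeff_eigenvector u : u \in N -> lam (rho u v1) = chi u * #|N|%:R.
Proof.
move=> uN; rewrite (lam_rho lamP) // (lam_sum lamP) -sumr_const.
congr (_ * _); apply: eq_bigr => x xN.
by rewrite (lamZ lamP) (lam_rho lamP) // lam_v0 mulr1 coinv_charV.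
Qed.

Lemma coeff_eigenvector_bi_equivariant : bi_equivariant N chi (fun g => lam (rho g v1)).
Proof.
move=> u g uN; rewrite !rhoM (lam_rho lamP) //.
by rewrite (rho_eigenvector uN) rhoZ (lamZ lamP) mulrC.
Qed.

Variable cN : R.
Hypotheses (cN_inv : cN * #|N|%:R = 1) (sNP : N \subset P).
Hypothesis bi_equivariant_vanish : forall Phi, bi_equivariant N chi Phi ->
  forall h, h \in P -> h \notin N -> Phi h = 0.

Lemma coinv_restriction_onto f : in_Ind N P chi f ->
  exists v, forall h, h \in P -> lam (rho h v) = f h.
Proof.
move=> f_ind; exists (cN ^+ 2 *: \sum_(x in P) f x *: rho (x^-1)%g v1) => h hP.
have vanish := bi_equivariant_vanish coeff_eigenvector_bi_equivariant.
rewrite rhoZ (lamZ lamP) rho_sum (lam_sum lamP).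
have hinj : injective (fun y : G => (y^-1 * h)%g) by move=> y z /mulIg /invg_inj.
rewrite (reindex_inj hinj) /= (bigID (mem N)) /= [X in _ + X]big1 ?addr0 => [|y]; last first.
  rewrite groupMr // groupV => /andP [yP yN].
  by rewrite rhoZ (lamZ lamP) -rhoM invMg invgK mulKVg vanish ?mulr0.
rewrite (eq_bigl (mem N)) => [|y]; last first.
  by rewrite groupMr // groupV andb_idl //; apply: (subsetP sNP).
rewrite (eq_bigr (fun _ => #|N|%:R * f h)) => [|y yN]; last first.
  rewrite rhoZ (lamZ lamP) -rhoM invMg invgK mulKVg coeff_eigenvector //.
  by rewrite f_ind ?groupV // mulrACA coinv_charV // mul1r mulrC.
by rewrite sumr_const -[_ *+ _]mulr_natl mulrA -expr2 mulrA -exprMn cN_inv expr1n mul1r.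
Qed.

End RestrictionOnto.

Lemma expr1Dn_pchar (R : nzRingType) (p : nat) (x : R) :
  p \in [pchar R] -> forall m, (1 + x) ^+ (p ^ m) = 1 + x ^+ (p ^ m).
Proof.
move=> pR; elim=> [|m IHm]; first by rewrite !expn0 !expr1.
rewrite expnSr !exprM IHm.
have := pFrobenius_autD_comm pR (commr_sym (commr1 (x ^+ (p ^ m)))).
by rewrite !pFrobenius_autE expr1n.
Qed.

Definition strictly_upper (R : pzRingType) (m : nat) (Z : 'M[R]_m) : Prop :=
  forall i j : 'I_m, (j <= i)%N -> Z i j = 0.

Lemma expr_strictly_upper (R : pzRingType) (m : nat) (Z : 'M[R]_m.+1) :
  strictly_upper Z -> forall k (i j : 'I_m.+1), (j < i + k)%N -> (Z ^+ k) i j = 0.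
Proof.
move=> Zup; elim=> [|k IHk] i j.
  by rewrite addn0 expr0 mxE -val_eqE /= => /gtn_eqF ->.
move=> ji; rewrite exprSr -mulmxE mxE big1 // => l _.
have [li|il] := ltnP l (i + k); first by rewrite IHk // mul0r.
by rewrite Zup ?mulr0 // -ltnS (leq_trans ji) // addnS.
Qed.

Lemma strictly_upperZ (R : pzRingType) (m : nat) (t : R) (Z : 'M[R]_m) :
  strictly_upper Z -> strictly_upper (t *: Z).
Proof. by move=> Zup i j ji; rewrite mxE Zup ?mulr0. Qed.

Lemma sqzero_mxZ (R : comPzRingType) (m : nat) (t : R) (Z : 'M[R]_m) :
  Z *m Z = 0 -> (t *: Z) *m (t *: Z) = 0.
Proof. by move=> ZZ; rewrite -scalemxAl -scalemxAr ZZ !scaler0. Qed.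

Section Unitriangular.
Variables (F : finFieldType) (n : nat).
Local Notation G := {'GL_n.+1[F]}.

Definition unitri_from (m : nat) : {set G} :=
  [set g : G | [forall l : 'I_n.+1, [forall j : 'I_n.+1,
     (m <= l)%N ==> (j <= l)%N ==> (GLval g l j == (j == l)%:R)]]].

Lemma unitri_fromP m (g : G) :
  reflect (forall l j : 'I_n.+1, (m <= l)%N -> (j <= l)%N -> GLval g l j = (j == l)%:R)
          (g \in unitri_from m).
Proof.
rewrite inE; apply: (iffP forallP) => [gP l j ml jl | gP l].
  by move: (forallP (gP l) j); rewrite ml jl => /eqP.
by apply/forallP => j; apply/implyP => ml; apply/implyP => jl; rewrite gP.
Qed.

Lemma unitri_from_group_set m : group_set (unitri_from m).
Proof.
apply/andP; split; first by apply/unitri_fromP => l j _ _; rewrite GL_1E mxE eq_sym.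
apply/subsetP => _ /imset2P [g h /unitri_fromP gP /unitri_fromP hP ->].
apply/unitri_fromP => l j ml jl; rewrite GL_MxE mxE (bigD1 l) //= gP // eqxx mul1r.
rewrite hP // big1 ?addr0 // => i il.
have [li|{}il|/val_inj eq_il] := ltngtP i l; last by rewrite eq_il eqxx in il.
  by rewrite gP ?(ltnW li) // (negbTE il) mul0r.
rewrite hP ?(leq_trans ml (ltnW il)) ?(leq_trans jl (ltnW il)) //.
by rewrite -val_eqE /= ltn_eqF ?mulr0 // (leq_ltn_trans jl il).
Qed.

Canonical unitri_from_group m := Group (unitri_from_group_set m).

Lemma unitri_from_eq0 m g (l j : 'I_n.+1) :
  g \in unitri_from m -> (m <= l)%N -> (j < l)%N -> GLval g l j = 0.
Proof. by move=> /unitri_fromP gP ml jl; rewrite gP ?(ltnW jl) // -val_eqE (ltn_eqF jl). Qed.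

Lemma unitri_from_diag m g (l : 'I_n.+1) :
  g \in unitri_from m -> (m <= l)%N -> GLval g l l = 1.
Proof. by move=> /unitri_fromP gP ml; rewrite gP ?eqxx. Qed.

Lemma unitri_fromS m1 m2 : (m1 <= m2)%N -> unitri_from m1 \subset unitri_from m2.
Proof.
move=> m12; apply/subsetP => g /unitri_fromP gP; apply/unitri_fromP => l j ml.
exact/gP/(leq_trans m12 ml).
Qed.

Lemma unipotent_unitri : unipotent F n = unitri_from 0.
Proof.
apply/setP => g; rewrite !inE; apply/forallP/forallP => gP i; apply/forallP => j;
  have := forallP (gP i) j.
  case/andP => gl gd; apply/implyP => _; apply/implyP.
  rewrite leq_eqVlt => /orP [/eqP/val_inj ji | ji]; first by move: gd; rewrite ji !eqxx.
  by rewrite -val_eqE /= ltn_eqF //; rewrite ji in gl.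
move=> /= gij; apply/andP; split; apply/implyP.
  by move=> ji; move: gij; rewrite ltnW //= -val_eqE /= ltn_eqF.
by move/eqP=> ij; move: gij; rewrite ij leqnn eqxx.
Qed.

Lemma mirabolic_unitri : mirabolic F n = unitri_from n.
Proof.
apply/setP => g; rewrite !inE; apply/forallP/forallP => gP i.
  apply/forallP => j; apply/implyP => ni; apply/implyP => _.
  have -> : i = ord_max by apply/val_inj/eqP; rewrite eqn_leq leq_ord.
  exact: gP.
by have := forallP (gP ord_max) i; rewrite leqnn leq_ord.
Qed.

Lemma unitri_expn (p : nat) (g : G) : p \in [pchar F] ->
  g \in unitri_from 0 -> (g ^+ (p ^ n.+1) = 1)%g.
Proof.
move=> pF /unitri_fromP gP; apply: val_inj; rewrite FinRing.val_unitX /=.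
have pM : p \in [pchar 'M[F]_n.+1] by rewrite pchar_lalg.
rewrite -[val g](subrKC 1) expr1Dn_pchar //.
have nilp : (GLval g - 1) ^+ n.+1 = 0.
  apply/matrixP => i j; rewrite [RHS]mxE expr_strictly_upper //.
    by move=> a b ba; rewrite !mxE gP // eq_sym subrr.
  by rewrite addnS ltnS (leq_trans (leq_ord j)) ?leq_addl.
have p_gt1 := prime_gt1 (pcharf_prime pF).
by rewrite -(subnKC (ltnW (ltn_expl n.+1 p_gt1))) exprD nilp mul0r addr0.
Qed.

Lemma unitri_pgroup (p : nat) : p \in [pchar F] -> (p.-group (unitri_from 0))%g.
Proof.
move=> pF; rewrite -pnat_exponent; apply: (@pnat_dvd _ (p ^ n.+1)).
  by apply/exponentP => g; apply: unitri_expn.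
by rewrite pnatX pnat_id ?(pcharf_prime pF).
Qed.

Definition sqzero_unit (Z : 'M[F]_n.+1) : G := insubd (1%g : G) (1%:M + Z).

Lemma sqzero_unitE Z : Z *m Z = 0 -> GLval (sqzero_unit Z) = 1%:M + Z.
Proof.
move=> ZZ; rewrite /sqzero_unit insubdK //.
have [] := @mulmx1_unit _ _ (1%:M + Z) (1%:M - Z) => //.
by rewrite mulmxDl !mulmxBr !mul1mx mulmx1 ZZ subr0 subrK.
Qed.

Lemma sqzero_unit_unitri Z :
  Z *m Z = 0 -> strictly_upper Z -> sqzero_unit Z \in unitri_from 0.
Proof.
move=> ZZ Zup; apply/unitri_fromP => a b _ ba.
by rewrite sqzero_unitE // !mxE Zup // addr0 eq_sym.
Qed.

Definition superdiag_sum (M : 'M[F]_n.+1) : F :=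
  \sum_(i < n) M (widen_ord (leqnSn n) i) (lift ord0 i).

Lemma superdiag_sumZ t M : superdiag_sum (t *: M) = t * superdiag_sum M.
Proof. by rewrite mulr_sumr; apply: eq_bigr => i _; rewrite mxE. Qed.

Lemma superdiag_sqzero_unit Z :
  Z *m Z = 0 -> superdiag_sum (GLval (sqzero_unit Z)) = superdiag_sum Z.
Proof.
move=> ZZ; rewrite sqzero_unitE //; apply: eq_bigr => i _.
by rewrite !mxE -val_eqE /= /bump /= add1n ltn_eqF ?add0r.
Qed.

(* The least m with h in unitri_from m exhibits the lowest row k of h that is
   not unitriangular. *)
Lemma unitri_boundary h : h \in unitri_from n -> h \notin unitri_from 0 ->
  exists k : 'I_n, exists2 j : 'I_n.+1, h \in unitri_from k.+1 /\ (j <= k)%N &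
    GLval h (widen_ord (leqnSn n) k) j != (j == widen_ord (leqnSn n) k)%:R.
Proof.
move=> hn h0.
have [m hm m_min] := ex_minnP (ex_intro (fun m => h \in unitri_from m) n hn).
have m_le_n : (m <= n)%N := m_min n hn.
case: m hm m_min m_le_n => [|k] hk k_min kn; first by rewrite hk in h0.
exists (Ordinal kn); have : h \notin unitri_from k.
  by apply/negP => /k_min; rewrite ltnn.
rewrite inE negb_forall => /existsP [l]; rewrite negb_forall.
move=> /existsP [j]; rewrite !negb_imply => /and3P [kl jl hlj].
have lk : widen_ord (leqnSn n) (Ordinal kn) = l.
  apply/val_inj/eqP; rewrite /= eqn_leq kl /= leqNgt.
  by apply: contra hlj => kl'; rewrite (unitri_fromP _ _ hk).
by exists j; [split; last by rewrite -lk in jl | rewrite lk].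
Qed.

(* With k and j as in unitri_boundary, h intertwines the elements
   1 + t h E_(j,k+1) h^-1 and 1 + t E_(j,k+1) of N, whose superdiagonals sum to
   t h_kj and t delta_jk respectively. *)
Section TwistedConjugates.
Variables (k : 'I_n) (j : 'I_n.+1) (h : G).
Hypotheses (hk : h \in unitri_from k.+1) (jk : (j <= k)%N).

Let k0 : 'I_n.+1 := widen_ord (leqnSn n) k.
Let k1 : 'I_n.+1 := lift ord0 k.
Let q : 'M[F]_n.+1 := GLval (h^-1)%g.
Let X : 'M[F]_n.+1 := delta_mx j k1.
Let Y : 'M[F]_n.+1 := GLval h *m X *m q.

Lemma delta_sqzero : X *m X = 0.
Proof. by rewrite mul_delta_mx_cond -val_eqE /= /bump /= add1n gtn_eqF ?ltnS. Qed.

Lemma delta_strictly_upper : strictly_upper X.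
Proof.
move=> a b ba; rewrite mxE.
have [aj | //] := eqVneq a j; have [bk | //] := eqVneq b k1.
by move: ba; rewrite aj bk /= /bump /= add1n ltnNge jk.
Qed.

Lemma superdiag_delta : superdiag_sum X = (j == k0)%:R.
Proof.
rewrite /superdiag_sum (bigD1 k) //= big1 ?addr0; first by rewrite mxE eqxx andbT eq_sym.
by move=> i ik; rewrite mxE (inj_eq lift_inj) (negbTE ik) andbF.
Qed.

Lemma conj_delta_entry a b : Y a b = GLval h a j * q k1 b.
Proof.
rewrite /Y /X -(mul_delta_mx (0 : 'I_1)) mulmxA -colE -mulmxA -rowE !mxE big_ord1.
by rewrite !mxE.
Qed.

Lemma conj_deltaE : Y *m GLval h = GLval h *m X.
Proof.
have qh : q *m GLval h = 1%:M by rewrite /q GL_VxE mulVmx //; exact: (GL_unit h).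
by rewrite /Y -!mulmxA qh mulmx1.
Qed.

Lemma conj_delta_sqzero : Y *m Y = 0.
Proof. by rewrite {2}/Y !mulmxA conj_deltaE -(mulmxA _ X X) delta_sqzero mulmx0 mul0mx. Qed.

Let hV : (h^-1)%g \in unitri_from k.+1. Proof. by rewrite groupV. Qed.

Lemma conj_delta_strictly_upper : strictly_upper Y.
Proof.
move=> a b ba; rewrite conj_delta_entry.
have [ka | ak] := ltnP k a; first by rewrite (unitri_from_eq0 hk) ?mul0r // (leq_ltn_trans jk).
by rewrite (unitri_from_eq0 hV) ?mulr0 //= /bump /= add1n ltnS (leq_trans ba).
Qed.

Lemma superdiag_conj_delta : superdiag_sum Y = GLval h k0 j.
Proof.
rewrite /superdiag_sum (bigD1 k) //= big1 ?addr0.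
  by rewrite conj_delta_entry (unitri_from_diag hV) ?mulr1 //= /bump /= add1n.
move=> i ik; rewrite conj_delta_entry.
have [ik' | ki] := ltnP i k.
  by rewrite (unitri_from_eq0 hV) ?mulr0 //= /bump /= !add1n.
have {}ki : (k < i)%N by rewrite ltn_neqAle ki andbT eq_sym.
by rewrite (unitri_from_eq0 hk) ?mul0r // (leq_ltn_trans jk).
Qed.

Lemma twisted_conjugates t : exists u u' : G,
  [/\ u \in unitri_from 0, u' \in unitri_from 0, (u * h = h * u')%g,
      superdiag_sum (GLval u) = t * GLval h k0 j
    & superdiag_sum (GLval u') = t * (j == k0)%:R].
Proof.
have YY := sqzero_mxZ t conj_delta_sqzero; have XX := sqzero_mxZ t delta_sqzero.
exists (sqzero_unit (t *: Y)), (sqzero_unit (t *: X)); split.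
- exact/sqzero_unit_unitri/strictly_upperZ/conj_delta_strictly_upper.
- exact/sqzero_unit_unitri/strictly_upperZ/delta_strictly_upper.
- apply: val_inj.
  change (GLval (sqzero_unit (t *: Y) * h)%g = GLval (h * sqzero_unit (t *: X))%g).
  rewrite !GL_MxE !sqzero_unitE //.
  by rewrite mulmxDl mulmxDr mul1mx mulmx1 -scalemxAl conj_deltaE scalemxAr.
- by rewrite superdiag_sqzero_unit // superdiag_sumZ superdiag_conj_delta.
- by rewrite superdiag_sqzero_unit // superdiag_sumZ superdiag_delta.
Qed.

End TwistedConjugates.

End Unitriangular.

Lemma unitri_bi_equivariant_vanish (F : finFieldType) (n : nat) (R : comNzRingType)
    (chi : F -> R) (Phi : {'GL_n.+1[F]} -> R) :
  nondegenerate_char chi -> bi_equivariant (unitri_from F n 0) (psiN (n:=n) chi) Phi ->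
  forall h, h \in unitri_from F n n -> h \notin unitri_from F n 0 -> Phi h = 0.
Proof.
move=> chi_nd Phi_bi h hn h0.
have [k [j [hk jk] hkj]] := unitri_boundary hn h0.
apply: (nondegenerate_char_twist chi_nd hkj) => t.
have [u [u' [uN u'N uh <- <-]]] := twisted_conjugates hk jk t.
have [Phi_uh _] := Phi_bi u h uN; have [_ Phi_hu'] := Phi_bi u' h u'N.
by change (psiN chi u * Phi h = Phi h * psiN chi u'); rewrite -Phi_uh -Phi_hu' uh.
Qed.

Theorem lemma2p14 (p : nat) (F : finFieldType) (n : nat)
  (R : comNzRingType) (zeta : R) (e : F -> nat)
  (V : lmodType R) (rho : {'GL_n.+1[F]} -> V -> V) (lam : V -> R) :
  prime p -> p \in [pchar F] ->
  noetherian R ->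
  (exists pinv : R, p%:R * pinv = 1) -> \sum_(i < p) zeta ^+ i = 0 ->
  (forall a b : F, e (a + b)%R = (e a + e b)%N %[mod p]) ->
  (exists a : F, (e a %% p != 0)%N) ->
  is_rep rho ->
  whittaker_type rho (unipotent F n) (psiN (n:=n) (psiR zeta e)) ->
  dual_generator rho (unipotent F n) (psiN (n:=n) (psiR zeta e)) lam ->
  forall f : {'GL_n.+1[F]} -> R,
    in_Ind (unipotent F n) (mirabolic F n) (psiN (n:=n) (psiR zeta e)) f ->
    exists W, whittaker_model rho lam W /\ {in mirabolic F n, W =1 f}.
Proof.
move=> p_pr pF _ [pinv pinvE] zeta_sum e_add e_nontriv rho_rep wt dg f f_ind.
rewrite unipotent_unitri in wt dg f_ind; rewrite mirabolic_unitri in f_ind *.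
have [v0 lam_v0] := dual_generator_attains1 wt dg.
have [k cardN] := p_natP (unitri_pgroup n pF).
have cN_inv : pinv ^+ k * #|unitri_from F n 0|%:R = 1.
  by rewrite cardN natrX -exprMn mulrC pinvE expr1n.
have chi_nd := psiR_nondegenerate zeta_sum e_add p_pr pinvE e_nontriv.
have [v vP] := coinv_restriction_onto rho_rep dg.1 lam_v0 cN_inv
  (unitri_fromS F n (leq0n n)) (fun Phi => unitri_bi_equivariant_vanish chi_nd) f_ind.
by exists (fun g => lam (rho g v)); split; [exists v | exact: vP].
Qed.
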